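(* In the setting of the context (FSR scheme with direct flux reconstruction), let $\mathcal{E}_j=(\Phi_{j+1/2}-\Phi_{j-1/2})/h$ evaluated on exact nodal values. If $\kappa_3=\kappa-1$, $\theta=1/3$ and $\theta_3=0$, then as $h\to0$, with derivatives at $x_j$, $$\mathcal{E}_j=\frac{\partial f}{\partial x}-\frac1{30}\frac{\partial^5 f}{\partial x^5}h^4+\frac{\kappa-1}{32}\left[\frac{\partial D}{\partial x}\frac{\partial^5 u}{\partial x^5}+D(u(x_j))\frac{\partial^6 u}{\partial x^6}\right]h^5+O(h^6),$$ where $f$ denotes $f(u(x))$ and $\partial D/\partial x=\frac{d}{dx}D(u(x))$ (fourth-order accuracy).
   Context: Let $h>0$, uniform grid $x_i=ih$, $i\in\mathbb{Z}$. Let $u$ be a smooth real function of $x$, $u_i=u(x_i)$; let $f$ (flux) and $D$ (dissipation coefficient) be smooth real functions of one variable; $f_i=f(u_i)$. For nodal values $g_i$ define successive central differences $(g_x)_i=(g_{i+1}-g_{i-1})/(2h)$, $(g_{xx})_i=((g_x)_{i+1}-(g_x)_{i-1})/(2h)$, and for the face $i+1/2$ with $j=i$, $k=i+1$, define $T_j[g]=\frac h4((g_x)_k-(g_x)_j)-\frac{h^2}{4}(g_{xx})_j$, $T_k[g]=\frac h4((g_x)_k-(g_x)_j)-\frac{h^2}{4}(g_{xx})_k$. Reconstructed solution states (parameters $\kappa,\kappa_3$): $u_L=\kappa\frac{u_j+u_k}{2}+(1-\kappa)[u_j+\frac h2(u_x)_j]+\kappa_3T_j[u]$, $u_R=\kappa\frac{u_j+u_k}{2}+(1-\kappa)[u_k-\frac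 h2(u_x)_k]+\kappa_3T_k[u]$. Reconstructed fluxes (parameters $\theta,\theta_3$): $f_L=\theta\frac{f_j+f_k}{2}+(1-\theta)[f_j+\frac h2(f_x)_j]+\theta_3T_j[f]$, $f_R=\theta\frac{f_j+f_k}{2}+(1-\theta)[f_k-\frac h2(f_x)_k]+\theta_3T_k[f]$. Numerical flux: $\Phi_{i+1/2}=\frac12(f_L+f_R)-\frac12D_{i+1/2}(u_R-u_L)$, with $D_{i+1/2}=\bar D(u_i,u_{i+1})$ for a smooth symmetric $\bar D$ with $\bar D(v,v)=D(v)$. *)

From Stdlib Require Import Reals ZArith Lra.
From Coquelicot Require Import Coquelicot.
Open Scope R_scope.

Definition smooth1 (g : R -> R) : Prop :=
  forall (n : nat) (x : R), ex_derive_n g n x.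

Fixpoint Ck2 (k : nat) (g : R -> R -> R) : Prop :=
  match k with
  | O => forall a b : R,
           continuous (fun p : R * R => g (fst p) (snd p)) (a, b)
  | S k' =>
      (forall a b : R,
         continuous (fun p : R * R => g (fst p) (snd p)) (a, b)) /\
      (forall a b : R, ex_derive (fun t => g t b) a) /\
      (forall a b : R, ex_derive (fun t => g a t) b) /\
      Ck2 k' (fun a b => Derive (fun t => g t b) a) /\
      Ck2 k' (fun a b => Derive (fun t => g a t) b)
  end.

Definition smooth2 (g : R -> R -> R) : Prop := forall k : nat, Ck2 k g.

Definition cdx (h : R) (g : Z -> R) (i : Z) : R :=
  (g (i + 1)%Z - g (i - 1)%Z) / (2 * h).

Definition cdxx (h : R) (g : Z -> R) (i : Z) : R :=
  (cdx h g (i + 1)%Z - cdx h g (i - 1)%Z) / (2 * h).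

(** Face i+1/2, with j = i, k = i+1. *)
Definition Tj (h : R) (g : Z -> R) (i : Z) : R :=
  h / 4 * (cdx h g (i + 1)%Z - cdx h g i) - h ^ 2 / 4 * cdxx h g i.

Definition Tk (h : R) (g : Z -> R) (i : Z) : R :=
  h / 4 * (cdx h g (i + 1)%Z - cdx h g i) - h ^ 2 / 4 * cdxx h g (i + 1)%Z.

Definition recL (k k3 h : R) (g : Z -> R) (i : Z) : R :=
  k * ((g i + g (i + 1)%Z) / 2)
  + (1 - k) * (g i + h / 2 * cdx h g i)
  + k3 * Tj h g i.

Definition recR (k k3 h : R) (g : Z -> R) (i : Z) : R :=
  k * ((g i + g (i + 1)%Z) / 2)
  + (1 - k) * (g (i + 1)%Z - h / 2 * cdx h g (i + 1)%Z)
  + k3 * Tk h g i.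

(** Numerical flux Phi_{i+1/2} of the FSR scheme with direct flux
    reconstruction, for nodal solution values [uv]. *)
Definition num_flux (f : R -> R) (Dbar : R -> R -> R)
    (kappa kappa3 theta theta3 h : R) (uv : Z -> R) (i : Z) : R :=
  let fv := fun m => f (uv m) in
  1 / 2 * (recL theta theta3 h fv i + recR theta theta3 h fv i)
  - 1 / 2 * Dbar (uv i) (uv (i + 1)%Z)
      * (recR kappa kappa3 h uv i - recL kappa kappa3 h uv i).

Definition trunc_err (f : R -> R) (Dbar : R -> R -> R) (u : R -> R)
    (kappa kappa3 theta theta3 h x0 : R) : R :=
  let uv := fun m : Z => u (x0 + IZR m * h) in
  (num_flux f Dbar kappa kappa3 theta theta3 h uv 0%Z
   - num_flux f Dbar kappa kappa3 theta theta3 h uv (-1)%Z) / h.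

From Stdlib Require Import Reals ZArith Lra Lia.
From Coquelicot Require Import Coquelicot.
Open Scope R_scope.

(* With theta = 1/3 and theta3 = 0 the averaged flux at face i+1/2 is the
   interpolant (- f_(i-1) + 7 f_i + 7 f_(i+1) - f_(i+2)) / 12, so the flux part
   of E_j is the fourth-order central difference of f(u), i.e.
   f(u)' - f(u)^(5) h^4 / 30 + O(h^6).  With kappa3 = kappa - 1 the jump
   u_R - u_L is (1 - kappa)/16 times the fifth difference S_i of u over the
   nodes i-2, ..., i+3, and S_i = h^5 u^(5) + (i + 1/2) h^6 u^(6) + O(h^7).
   The face coefficients are Dbar(u_j, u_(j+-1)) = D(u_j) +- (h/2) (D o u)' + O(h^2),
   the factor 1/2 because symmetry of Dbar forces D' = 2 d_2 Dbar on the
   diagonal.  In the difference of the two face terms the h^5 contributions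
   cancel, leaving h^6 ((D o u)' u^(5) + D u^(6)) + O(h^7); all remainders
   come from the Taylor-Lagrange formula. *)

Definition ex_derive_le (n : nat) (f : R -> R) : Prop :=
  forall k x, (k <= n)%nat -> ex_derive_n f k x.

Lemma Derive_n_succ f k x : Derive_n f (S k) x = Derive_n (Derive f) k x.
Proof.
  revert x; induction k as [|k IHk]; intros x; [reflexivity|].
  simpl; apply Derive_ext; exact IHk.
Qed.

Lemma ex_derive_n_succ f k x :
  (forall y, ex_derive f y) ->
  ex_derive_n f (S k) x <-> ex_derive_n (Derive f) k x.
Proof.
  intros Hf; destruct k as [|k]; simpl.
  - split; auto.
  - split; apply ex_derive_ext; intros t; [|symmetry]; apply Derive_n_succ.
Qed.

Lemma ex_derive_le_0 f : ex_derive_le 0 f.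
Proof. intros k x Hk; replace k with 0%nat by lia; exact I. Qed.

Lemma ex_derive_le_succ n f :
  ex_derive_le (S n) f <-> (forall x, ex_derive f x) /\ ex_derive_le n (Derive f).
Proof.
  split.
  - intros H.
    assert (Hf : forall x, ex_derive f x) by (intros x; apply (H 1%nat); lia).
    split; [exact Hf|].
    intros k x Hk; apply ex_derive_n_succ; [exact Hf|]; apply H; lia.
  - intros [Hf H] [|k] x Hk; [exact I|].
    apply ex_derive_n_succ; [exact Hf|]; apply H; lia.
Qed.

Lemma ex_derive_le_weaken m n f : (m <= n)%nat -> ex_derive_le n f -> ex_derive_le m f.
Proof. intros Hmn H k x Hk; apply H; lia. Qed.

Lemma ex_derive_le_ext n f g :
  (forall x, f x = g x) -> ex_derive_le n f -> ex_derive_le n g.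
Proof. intros E H k x Hk; apply (ex_derive_n_ext f); auto. Qed.

Lemma ex_derive_le_plus n : forall f g,
  ex_derive_le n f -> ex_derive_le n g -> ex_derive_le n (fun x => f x + g x).
Proof.
  induction n as [|n IHn]; intros f g Hf Hg; [apply ex_derive_le_0|].
  apply ex_derive_le_succ in Hf as [Df Hf], Hg as [Dg Hg].
  apply ex_derive_le_succ; split; [intros x; apply (ex_derive_plus f g); auto|].
  apply (ex_derive_le_ext _ _ _ (fun x => eq_sym (Derive_plus f g x (Df x) (Dg x)))).
  apply IHn; assumption.
Qed.

Lemma ex_derive_le_mult n : forall f g,
  ex_derive_le n f -> ex_derive_le n g -> ex_derive_le n (fun x => f x * g x).
Proof.
  induction n as [|n IHn]; intros f g Hf Hg; [apply ex_derive_le_0|].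
  pose proof (ex_derive_le_weaken n _ f (Nat.le_succ_diag_r n) Hf) as Hf'.
  pose proof (ex_derive_le_weaken n _ g (Nat.le_succ_diag_r n) Hg) as Hg'.
  apply ex_derive_le_succ in Hf as [Df Hf], Hg as [Dg Hg].
  apply ex_derive_le_succ; split; [intros x; apply (ex_derive_mult f g); auto|].
  apply (ex_derive_le_ext _ _ _ (fun x => eq_sym (Derive_mult f g x (Df x) (Dg x)))).
  apply ex_derive_le_plus; apply IHn; assumption.
Qed.

Lemma ex_derive_le_comp n : forall f u,
  ex_derive_le n f -> ex_derive_le n u -> ex_derive_le n (fun x => f (u x)).
Proof.
  induction n as [|n IHn]; intros f u Hf Hu; [apply ex_derive_le_0|].
  pose proof (ex_derive_le_weaken n _ u (Nat.le_succ_diag_r n) Hu) as Hu'.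
  apply ex_derive_le_succ in Hf as [Df Hf], Hu as [Du Hu].
  apply ex_derive_le_succ; split; [intros x; apply (ex_derive_comp f u); auto|].
  apply (ex_derive_le_ext _ _ _ (fun x => eq_sym (Derive_comp f u x (Df (u x)) (Du x)))).
  apply ex_derive_le_mult; [|apply IHn]; assumption.
Qed.

Lemma smooth1_ex_derive_le f : smooth1 f <-> forall n, ex_derive_le n f.
Proof.
  split; [intros H n k x _; apply H|].
  intros H n x; exact (H n n x (le_n n)).
Qed.

Lemma smooth1_comp f u : smooth1 f -> smooth1 u -> smooth1 (fun x => f (u x)).
Proof.
  rewrite !smooth1_ex_derive_le; intros Hf Hu n; apply ex_derive_le_comp; auto.
Qed.

Lemma smooth1_opp f : smooth1 f -> smooth1 (fun x => f (- x)).
Proof.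
  intros Hf n x; apply ex_derive_n_comp_opp, filter_forall; intros y k _; apply Hf.
Qed.

Lemma Ck2_ex_derive_le k : forall g a, Ck2 k g -> ex_derive_le k (g a).
Proof.
  induction k as [|k IHk]; intros g a Hg; [apply ex_derive_le_0|].
  destruct Hg as (_ & _ & Dg & _ & Hg).
  apply ex_derive_le_succ; split; [apply Dg|].
  exact (IHk _ a Hg).
Qed.

Lemma smooth2_smooth1_r g a : smooth2 g -> smooth1 (g a).
Proof. intros Hg; apply smooth1_ex_derive_le; intros k; apply Ck2_ex_derive_le, Hg. Qed.

(** * Big-O as h -> 0+ *)

Definition bigOh (p : nat) (phi : R -> R) : Prop :=
  exists C d : R, 0 < d /\ forall h, 0 < h < d -> Rabs (phi h) <= C * h ^ p.

Lemma bigOh_ext p phi psi :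
  (forall h, 0 < h -> phi h = psi h) -> bigOh p phi -> bigOh p psi.
Proof.
  intros E (C & d & Hd & H); exists C, d; split; [exact Hd|].
  intros h Hh; rewrite <- E by lra; auto.
Qed.

Lemma bigOh_plus p phi psi :
  bigOh p phi -> bigOh p psi -> bigOh p (fun h => phi h + psi h).
Proof.
  intros (C1 & d1 & Hd1 & H1) (C2 & d2 & Hd2 & H2).
  exists (C1 + C2), (Rmin d1 d2); split; [apply Rmin_pos; assumption|].
  intros h [Hh0 Hh]; apply Rmin_Rgt in Hh as [Hh1 Hh2].
  specialize (H1 h (conj Hh0 Hh1)); specialize (H2 h (conj Hh0 Hh2)).
  pose proof (Rabs_triang (phi h) (psi h)); lra.
Qed.

Lemma bigOh_scal p c phi : bigOh p phi -> bigOh p (fun h => c * phi h).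
Proof.
  intros (C & d & Hd & H); exists (Rabs c * C), d; split; [exact Hd|].
  intros h Hh; rewrite Rabs_mult, Rmult_assoc.
  apply Rmult_le_compat_l; [apply Rabs_pos | auto].
Qed.

Lemma bigOh_minus p phi psi :
  bigOh p phi -> bigOh p psi -> bigOh p (fun h => phi h - psi h).
Proof.
  intros Hphi Hpsi; apply (bigOh_ext p (fun h => phi h + -1 * psi h)).
  - intros h _; ring.
  - apply bigOh_plus, bigOh_scal; assumption.
Qed.

Lemma bigOh_mult p q phi psi :
  bigOh p phi -> bigOh q psi -> bigOh (p + q) (fun h => phi h * psi h).
Proof.
  intros (C1 & d1 & Hd1 & H1) (C2 & d2 & Hd2 & H2).
  exists (C1 * C2), (Rmin d1 d2); split; [apply Rmin_pos; assumption|].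
  intros h [Hh0 Hh]; apply Rmin_Rgt in Hh as [Hh1 Hh2].
  specialize (H1 h (conj Hh0 Hh1)); specialize (H2 h (conj Hh0 Hh2)).
  rewrite Rabs_mult, pow_add.
  replace (C1 * C2 * (h ^ p * h ^ q)) with (C1 * h ^ p * (C2 * h ^ q)) by ring.
  apply Rmult_le_compat; auto; apply Rabs_pos.
Qed.

Lemma bigOh_weaken p q phi : (q <= p)%nat -> bigOh p phi -> bigOh q phi.
Proof.
  intros Hqp (C & d & Hd & H).
  exists (Rabs C), (Rmin d 1); split; [apply Rmin_pos; lra|].
  intros h [Hh0 Hh]; apply Rmin_Rgt in Hh as [Hhd Hh1].
  assert (Hpow : 0 <= h ^ p <= h ^ q).
  { replace p with (q + (p - q))%nat by lia; rewrite pow_add.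
    pose proof (pow_le h q ltac:(lra)); pose proof (pow_le h (p - q) ltac:(lra)).
    pose proof (pow_incr h 1 (p - q) ltac:(lra)); rewrite pow1 in *; nra. }
  specialize (H h (conj Hh0 Hhd)); pose proof (Rle_abs C); pose proof (Rabs_pos C); nra.
Qed.

Lemma bigOh_div_h p phi : bigOh (S p) phi -> bigOh p (fun h => phi h / h).
Proof.
  intros (C & d & Hd & H); exists C, d; split; [exact Hd|].
  intros h Hh; specialize (H h Hh); simpl in H.
  rewrite Rabs_div, (Rabs_pos_eq h) by lra.
  apply Rle_div_l; lra.
Qed.

Lemma bigOh_const c : bigOh 0 (fun _ => c).
Proof. exists (Rabs c), 1; split; [lra|]; intros h _; simpl; lra. Qed.

Lemma bigOh_pow p : bigOh p (fun h => h ^ p).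
Proof.
  exists 1, 1; split; [lra|]; intros h Hh.
  rewrite Rabs_pos_eq by (apply pow_le; lra); lra.
Qed.

Lemma bigOh_mult_sub p q m n k a A b B :
  (k <= p + n)%nat -> (k <= m + q)%nat -> (k <= p + q)%nat ->
  bigOh p (fun h => a h - A h) -> bigOh m A ->
  bigOh q (fun h => b h - B h) -> bigOh n B ->
  bigOh k (fun h => a h * b h - A h * B h).
Proof.
  intros Hpn Hmq Hpq Ha HA Hb HB.
  apply (bigOh_ext k (fun h => (a h - A h) * B h + A h * (b h - B h)
                               + (a h - A h) * (b h - B h))).
  { intros h _; ring. }
  repeat apply bigOh_plus.
  - apply (bigOh_weaken (p + n)); [exact Hpn | apply bigOh_mult; assumption].
  - apply (bigOh_weaken (m + q)); [exact Hmq | apply bigOh_mult; assumption].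
  - apply (bigOh_weaken (p + q)); [exact Hpq | apply bigOh_mult; assumption].
Qed.

(** * Taylor expansion *)

Definition taylor_poly (F : R -> R) (N : nat) (x t : R) : R :=
  sum_f_R0 (fun m => t ^ m / INR (fact m) * Derive_n F m x) N.

Ltac expand_taylor_poly :=
  unfold taylor_poly; cbn [sum_f_R0]; simpl fact; rewrite !INR_IZR_INZ; simpl Z.of_nat.

Lemma taylor_poly_at_0 F N x : taylor_poly F N x 0 = F x.
Proof.
  unfold taylor_poly; induction N as [|N IHN]; simpl; [field|].
  rewrite IHN; unfold Rdiv; ring.
Qed.

Lemma taylor_poly_opp F N x t :
  smooth1 F -> taylor_poly (fun s => F (- s)) N (- x) t = taylor_poly F N x (- t).
Proof.
  intros HF; unfold taylor_poly; apply sum_eq; intros m _.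
  rewrite Derive_n_comp_opp, Ropp_involutive
    by (apply filter_forall; intros y k _; apply HF).
  replace ((- t) ^ m) with ((-1) ^ m * t ^ m) by (rewrite <- Rpow_mult_distr; f_equal; ring).
  unfold Rdiv; ring.
Qed.

Lemma continuity_pt_local_bound G x :
  continuity_pt G x ->
  exists d, 0 < d /\ forall y, Rabs (y - x) < d -> Rabs (G y) <= Rabs (G x) + 1.
Proof.
  intros HG; destruct (HG 1 Rlt_0_1) as (d & Hd & HGd).
  exists d; split; [exact Hd|]; intros y Hy.
  destruct (Req_dec y x) as [-> | Hne]; [lra|].
  specialize (HGd y (conj (conj I (not_eq_sym Hne)) Hy)); simpl in HGd; unfold R_dist in HGd.
  pose proof (Rabs_triang_inv (G y) (G x)); lra.
Qed.

Lemma taylor_remainder_right F N x :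
  smooth1 F ->
  exists M d, 0 < d /\ forall t, 0 <= t <= d ->
    Rabs (F (x + t) - taylor_poly F N x t) <= M * t ^ S N.
Proof.
  intros HF; set (G := Derive_n F (S N)).
  destruct (continuity_pt_local_bound G x) as (d & Hd & HG).
  { apply continuity_pt_filterlim, (ex_derive_continuous G), (HF (S (S N))). }
  exists (Rabs (G x) + 1), (d / 2); split; [lra|].
  intros t [[Ht | <-] Htd].
  - destruct (Taylor_Lagrange F N x (x + t)) as (z & Hz & ->); [lra | intros; apply HF|].
    unfold taylor_poly; rewrite !Rplus_minus_l; fold G.
    assert (Hfact : 1 <= INR (fact (S N))) by (apply (le_INR 1), lt_O_fact).
    assert (Hcoef : 0 <= t ^ S N / INR (fact (S N)) <= t ^ S N).
    { pose proof (pow_le t (S N) ltac:(lra)); split.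
      - apply Rdiv_le_0_compat; lra.
      - apply Rle_div_l; nra. }
    assert (HGz : Rabs (G z) <= Rabs (G x) + 1) by (apply HG; rewrite Rabs_pos_eq; lra).
    rewrite Rabs_mult, (Rabs_pos_eq (_ / _)) by lra.
    rewrite Rmult_comm; apply Rmult_le_compat; try lra; apply Rabs_pos.
  - rewrite Rplus_0_r, taylor_poly_at_0, Rminus_eq_0, Rabs_R0, pow_i by lia; lra.
Qed.

Lemma taylor_remainder F N x :
  smooth1 F ->
  exists M d, 0 < d /\ forall t, Rabs t <= d ->
    Rabs (F (x + t) - taylor_poly F N x t) <= M * Rabs t ^ S N.
Proof.
  intros HF.
  destruct (taylor_remainder_right F N x HF) as (M1 & d1 & Hd1 & H1).
  destruct (taylor_remainder_right _ N (- x) (smooth1_opp F HF)) as (M2 & d2 & Hd2 & H2).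
  exists (Rmax M1 M2), (Rmin d1 d2); split; [apply Rmin_pos; assumption|].
  intros t Ht; destruct (Rle_or_lt 0 t) as [Ht0 | Ht0].
  - rewrite (Rabs_pos_eq t) in Ht |- * by exact Ht0.
    apply Rle_trans with (M1 * t ^ S N).
    + apply H1; split; [lra|]; apply Rle_trans with (1 := Ht), Rmin_l.
    + apply Rmult_le_compat_r; [apply pow_le; lra | apply Rmax_l].
  - rewrite (Rabs_left t) in Ht |- * by exact Ht0.
    specialize (H2 (- t)).
    rewrite taylor_poly_opp, Ropp_involutive in H2 by exact HF.
    replace (- (- x + - t)) with (x + t) in H2 by ring.
    apply Rle_trans with (M2 * (- t) ^ S N).
    + apply H2; split; [lra|]; apply Rle_trans with (1 := Ht), Rmin_r.
    + apply Rmult_le_compat_r; [apply pow_le; lra | apply Rmax_r].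
Qed.

Lemma bigOh_taylor_node F N x m :
  smooth1 F -> bigOh (S N) (fun h => F (x + m * h) - taylor_poly F N x (m * h)).
Proof.
  intros HF; destruct (taylor_remainder F N x HF) as (M & d & Hd & H).
  exists (M * Rabs m ^ S N), (d / (Rabs m + 1)).
  pose proof (Rabs_pos m); split; [apply Rdiv_lt_0_compat; lra|].
  intros h [Hh0 Hhd].
  replace (M * Rabs m ^ S N * h ^ S N) with (M * Rabs (m * h) ^ S N)
    by (rewrite Rabs_mult, (Rabs_pos_eq h), Rpow_mult_distr by lra; ring).
  apply H; rewrite Rabs_mult, (Rabs_pos_eq h) by lra.
  apply Rlt_div_r in Hhd; nra.
Qed.

(** * Symmetric functions of two variables *)

Lemma Rabs_between a b c : Rmin a b <= c <= Rmax a b -> Rabs (c - a) <= Rabs (b - a).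
Proof.
  unfold Rmin, Rmax; destruct (Rle_dec a b); intros Hc; unfold Rabs;
    destruct (Rcase_abs (c - a)), (Rcase_abs (b - a)); lra.
Qed.

Lemma is_derive_diag_sym (g : R -> R -> R) v :
  (forall a b, g a b = g b a) ->
  (forall a b, ex_derive (g a) b) ->
  continuous (fun p : R * R => Derive (g (fst p)) (snd p)) (v, v) ->
  is_derive (fun w => g w w) v (2 * Derive (g v) v).
Proof.
  intros Hsym Hg Hc.
  set (dg := fun a b => Derive (g a) b).
  assert (Hc2 : continuity_2d_pt dg v v) by (apply continuity_2d_pt_filterlim; exact Hc).
  assert (mean_value : forall a y, exists c, Rmin v y <= c <= Rmax v y
                                        /\ g a y - g a v = dg a c * (y - v)).
  { intros a y; apply (MVT_gen (g a) v y (dg a)).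
    - intros z _; apply Derive_correct, Hg.
    - intros z _; apply continuity_pt_filterlim, (ex_derive_continuous (g a)), Hg. }
  apply is_derive_Reals; intros eps Heps.
  destruct (Hc2 (mkposreal (eps / 2) ltac:(lra))) as [del Hdel]; simpl in Hdel.
  exists del; intros k Hk0 Hk.
  (* g (v+k) (v+k) - g v v = [g (v+k) (v+k) - g (v+k) v] + [g v (v+k) - g v v] by symmetry;
     the mean value theorem in the second variable handles both brackets. *)
  destruct (mean_value (v + k) (v + k)) as (c1 & Hc1 & E1).
  destruct (mean_value v (v + k)) as (c2 & Hc2v & E2).
  apply Rabs_between in Hc1, Hc2v; replace (v + k - v) with k in Hc1, Hc2v, E1, E2 by ring.
  replace ((g (v + k) (v + k) - g v v) / k - 2 * Derive (g v) v)
    with ((dg (v + k) c1 - dg v v) + (dg v c2 - dg v v)).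
  - pose proof (Hdel (v + k) c1 ltac:(replace (v + k - v) with k by ring; lra) ltac:(lra)).
    pose proof (Hdel v c2 ltac:(rewrite Rminus_eq_0, Rabs_R0; apply cond_pos) ltac:(lra)).
    pose proof (Rabs_triang (dg (v + k) c1 - dg v v) (dg v c2 - dg v v)); lra.
  - rewrite (Hsym (v + k) v) in E1; unfold dg in *; field_simplify_eq; [|exact Hk0].
    lra.
Qed.

(** * The FSR reconstruction on nodal values *)

Definition fifth_diff (g : Z -> R) (i : Z) : R :=
  - g (i - 2)%Z + 5 * g (i - 1)%Z - 10 * g i
  + 10 * g (i + 1)%Z - 5 * g (i + 2)%Z + g (i + 3)%Z.

Definition central_diff4 (g : Z -> R) (i : Z) : R :=
  (g (i - 2)%Z - 8 * g (i - 1)%Z + 8 * g (i + 1)%Z - g (i + 2)%Z) / 12.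

Ltac normalize_nodes g :=
  repeat match goal with |- context [g ?a] => progress ring_simplify a end.

Lemma recR_sub_recL kappa h g i : h <> 0 ->
  recR kappa (kappa - 1) h g i - recL kappa (kappa - 1) h g i
  = (1 - kappa) / 16 * fifth_diff g i.
Proof.
  intros Hh; unfold recR, recL, Tk, Tj, cdxx, cdx, fifth_diff.
  normalize_nodes g.
  field; exact Hh.
Qed.

Lemma recL_add_recR h g i : h <> 0 ->
  recL (1 / 3) 0 h g i + recR (1 / 3) 0 h g i
  = (- g (i - 1)%Z + 7 * g i + 7 * g (i + 1)%Z - g (i + 2)%Z) / 6.
Proof.
  intros Hh; unfold recR, recL, Tk, Tj, cdxx, cdx.
  normalize_nodes g.
  field; exact Hh.
Qed.

Lemma num_flux_FSR f Dbar kappa h g i : h <> 0 ->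
  num_flux f Dbar kappa (kappa - 1) (1 / 3) 0 h g i
  = (- f (g (i - 1)%Z) + 7 * f (g i) + 7 * f (g (i + 1)%Z) - f (g (i + 2)%Z)) / 12
    + (kappa - 1) / 32 * (Dbar (g i) (g (i + 1)%Z) * fifth_diff g i).
Proof.
  intros Hh; unfold num_flux; cbv zeta.
  rewrite recL_add_recR, recR_sub_recL by exact Hh.
  field.
Qed.

Lemma num_flux_FSR_jump f Dbar kappa h g i : h <> 0 ->
  num_flux f Dbar kappa (kappa - 1) (1 / 3) 0 h g i
  - num_flux f Dbar kappa (kappa - 1) (1 / 3) 0 h g (i - 1)
  = central_diff4 (fun m => f (g m)) i
    + (kappa - 1) / 32 * (Dbar (g i) (g (i + 1)%Z) * fifth_diff g i
                          - Dbar (g (i - 1)%Z) (g i) * fifth_diff g (i - 1)).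
Proof.
  intros Hh; rewrite !num_flux_FSR by exact Hh.
  unfold central_diff4; normalize_nodes g.
  field.
Qed.

(** * Expansions on the grid *)

Definition grid (u : R -> R) (x h : R) (m : Z) : R := u (x + IZR m * h).

Lemma fifth_diff_expansion u x i : smooth1 u ->
  bigOh 7 (fun h => fifth_diff (grid u x h) i
                    - (Derive_n u 5 x * h ^ 5 + (IZR i + 1 / 2) * Derive_n u 6 x * h ^ 6)).
Proof.
  intros Hu.
  set (rem := fun m h => u (x + m * h) - taylor_poly u 6 x (m * h)).
  apply (bigOh_ext 7 (fun h =>
    -1 * rem (IZR (i - 2)) h + 5 * rem (IZR (i - 1)) h + -10 * rem (IZR i) h
    + 10 * rem (IZR (i + 1)) h + -5 * rem (IZR (i + 2)) h + 1 * rem (IZR (i + 3)) h)).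
  - intros h _; unfold rem, fifth_diff, grid; expand_taylor_poly.
    rewrite ?minus_IZR, ?plus_IZR; field.
  - repeat apply bigOh_plus; apply bigOh_scal, bigOh_taylor_node, Hu.
Qed.

Lemma central_diff4_expansion F x : smooth1 F ->
  bigOh 6 (fun h => central_diff4 (grid F x h) 0 / h
                    - (Derive F x - 1 / 30 * Derive_n F 5 x * h ^ 4)).
Proof.
  intros HF.
  set (rem := fun m h => F (x + m * h) - taylor_poly F 6 x (m * h)).
  apply (bigOh_ext 6 (fun h =>
    (1 / 12 * rem (-2) h + -2 / 3 * rem (-1) h + 2 / 3 * rem 1 h + -1 / 12 * rem 2 h) / h)).
  - intros h Hh; unfold rem, central_diff4, grid; cbn [Z.sub Z.add Z.opp].
    expand_taylor_poly; change (Derive_n F 1 x) with (Derive F x).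
    field; lra.
  - apply bigOh_div_h; repeat apply bigOh_plus; apply bigOh_scal, bigOh_taylor_node, HF.
Qed.

Section Dissipation.

Variables (u D : R -> R) (Dbar : R -> R -> R) (x : R).
Hypotheses (Hu : smooth1 u) (HDbar : smooth2 Dbar)
  (Hsym : forall a b, Dbar a b = Dbar b a) (Hdiag : forall v, Dbar v v = D v).

Lemma is_derive_D v : is_derive D v (2 * Derive (Dbar v) v).
Proof.
  destruct (HDbar 1%nat) as (_ & _ & HD2 & _ & Hc2).
  apply (is_derive_ext (fun w => Dbar w w)); [exact Hdiag|].
  apply is_derive_diag_sym; [exact Hsym | exact HD2 | apply Hc2].
Qed.

Lemma Derive_face_coeff :
  Derive (fun y => Dbar (u x) (u y)) x = Derive (fun y => D (u y)) x / 2.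
Proof.
  assert (HD := is_derive_D (u x)).
  rewrite (Derive_comp (Dbar (u x)) u), (Derive_comp D u); try apply (Hu 1%nat).
  - rewrite (is_derive_unique _ _ _ HD); field.
  - exists (2 * Derive (Dbar (u x)) (u x)); exact HD.
  - apply (smooth2_smooth1_r _ _ HDbar 1%nat).
Qed.

Lemma face_coeff_expansion (m : Z) :
  bigOh 2 (fun h => Dbar (grid u x h 0) (grid u x h m)
                    - (D (u x) + IZR m / 2 * Derive (fun y => D (u y)) x * h)).
Proof.
  set (G := fun y => Dbar (u x) (u y)).
  pose proof (smooth1_comp _ _ (smooth2_smooth1_r _ (u x) HDbar) Hu) as HG.
  apply (bigOh_ext 2 (fun h => G (x + IZR m * h) - taylor_poly G 1 x (IZR m * h))).
  - intros h _; unfold taylor_poly; cbn [sum_f_R0].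
    change (Derive_n G 1 x) with (Derive G x).
    unfold G at 3; rewrite Derive_face_coeff.
    change (Derive_n G 0 x) with (G x); unfold G, grid.
    rewrite Rmult_0_l, Rplus_0_r, Hdiag; simpl; field.
  - exact (bigOh_taylor_node G 1 x (IZR m) HG).
Qed.

Lemma face_dissipation_expansion :
  bigOh 7 (fun h => Dbar (grid u x h 0) (grid u x h 1) * fifth_diff (grid u x h) 0
                    - Dbar (grid u x h (-1)) (grid u x h 0) * fifth_diff (grid u x h) (-1)
                    - (Derive (fun y => D (u y)) x * Derive_n u 5 x
                       + D (u x) * Derive_n u 6 x) * h ^ 6).
Proof.
  set (A := fun (m : Z) h => D (u x) + IZR m / 2 * Derive (fun y => D (u y)) x * h).
  set (B := fun (i : Z) h => Derive_n u 5 x * h ^ 5 + (IZR i + 1 / 2) * Derive_n u 6 x * h ^ 6).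
  assert (HA : forall m, bigOh 0 (A m)).
  { intros m.
    apply (bigOh_ext 0 (fun h => D (u x) + IZR m / 2 * Derive (fun y => D (u y)) x * h ^ 1)).
    - intros h _; unfold A; ring.
    - apply bigOh_plus; [apply bigOh_const|].
      apply (bigOh_weaken 1); [lia | apply bigOh_scal, bigOh_pow]. }
  assert (HB : forall i, bigOh 5 (B i)).
  { intros i; apply bigOh_plus; [apply bigOh_scal, bigOh_pow|].
    apply (bigOh_weaken 6); [lia | apply bigOh_scal, bigOh_pow]. }
  assert (Hright := bigOh_mult_sub 2 7 0 5 7
    (fun h => Dbar (grid u x h 0) (grid u x h 1)) (A 1%Z)
    (fun h => fifth_diff (grid u x h) 0) (B 0%Z) ltac:(lia) ltac:(lia) ltac:(lia)
    (face_coeff_expansion 1) (HA 1%Z) (fifth_diff_expansion u x 0 Hu) (HB 0%Z)).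
  assert (Hleft := bigOh_mult_sub 2 7 0 5 7
    (fun h => Dbar (grid u x h 0) (grid u x h (-1))) (A (-1)%Z)
    (fun h => fifth_diff (grid u x h) (-1)) (B (-1)%Z) ltac:(lia) ltac:(lia) ltac:(lia)
    (face_coeff_expansion (-1)) (HA (-1)%Z) (fifth_diff_expansion u x (-1) Hu) (HB (-1)%Z)).
  refine (bigOh_ext 7 _ _ _ (bigOh_minus _ _ _ Hright Hleft)).
  intros h _; rewrite (Hsym (grid u x h (-1))); unfold A, B; cbv beta; field.
Qed.

End Dissipation.

Lemma trunc_err_grid f Dbar u kappa kappa3 theta theta3 h x :
  trunc_err f Dbar u kappa kappa3 theta theta3 h x
  = (num_flux f Dbar kappa kappa3 theta theta3 h (grid u x h) 0
     - num_flux f Dbar kappa kappa3 theta theta3 h (grid u x h) (-1)) / h.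
Proof. reflexivity. Qed.

Theorem mainTheorem3 :
  forall (u f D : R -> R) (Dbar : R -> R -> R) (kappa : R),
    smooth1 u -> smooth1 f -> smooth1 D -> smooth2 Dbar ->
    (forall a b : R, Dbar a b = Dbar b a) ->
    (forall v : R, Dbar v v = D v) ->
    forall x0 : R,
      exists C delta : R, 0 < delta /\
        forall h : R, 0 < h < delta ->
          Rabs (trunc_err f Dbar u kappa (kappa - 1) (1 / 3) 0 h x0
                - ( Derive (fun y => f (u y)) x0
                    - 1 / 30 * Derive_n (fun y => f (u y)) 5 x0 * h ^ 4
                    + (kappa - 1) / 32
                      * ( Derive (fun y => D (u y)) x0 * Derive_n u 5 x0
                          + D (u x0) * Derive_n u 6 x0 ) * h ^ 5 ))
          <= C * h ^ 6.
Proof.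
  (* Differentiability of D is inherited from Dbar (is_derive_D). *)
  intros u f D Dbar kappa Hu Hf _ HDbar Hsym Hdiag x0.
  set (F := fun y => f (u y)).
  refine (bigOh_ext 6 _ _ _ (bigOh_plus 6 _ _
    (central_diff4_expansion F x0 (smooth1_comp f u Hf Hu))
    (bigOh_scal 6 ((kappa - 1) / 32) _
       (bigOh_div_h 6 _ (face_dissipation_expansion u D Dbar x0 Hu HDbar Hsym Hdiag))))).
  intros h Hh; cbv beta.
  rewrite trunc_err_grid, (num_flux_FSR_jump _ _ _ _ _ 0) by lra.
  change (fun m => f (grid u x0 h m)) with (grid F x0 h); cbn [Z.add Z.sub Z.opp].
  field; lra.
Qed.
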